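(* Let $\tau$ be a tuple of positive integers, $0\le k\le \ell$, and $\hat P_\tau=C\sqcup O$ the $k$-decomposition. Let $F$ be a nonempty face of $\mathcal{O}_{C,O}(\tau)$ such that none of the nonnegativity inequalities $x_p\ge 0$ ($p\in C$) and none of the chain inequalities holds with equality at every point of $F$, let $\varphi$ be the partition of $O$ associated with $F$, and let $\pi=\varphi\cup\{\{c\}:c\in C\}$. Then the quotient poset $\hat P_\tau/\pi$ is of the form $\hat P_{\tau'}$ for some tuple $\tau'$ of positive integers; that is, after removing its minimum $\{\hat0\}$ and its maximum (the block containing $\hat1$), it is isomorphic to $P_{\tau'}$.
   Context: Let $\tau=(\tau_1,\dots,\tau_\ell)$ be positive integers. The poset $P_\tau$ has elements $y^i_j$ ($1\le i\le\ell$, $1\le j\le\tau_i$) with $y^i_j<y^{i'}_{j'}$ iff $i<i'$; $Y^i=\{y^i_1,\dots,y^i_{\tau_i}\}$; for a tuple $\tau'$ of positive integers $P_{\tau'}$ is defined in the same way (the empty tuple giving the empty poset). $\hat P_\tau=P_\tau\cup\{\hat0,\hat1\}$ with new minimum $\hat0$ and maximum $\hat1$, $Y^0=\{\hat0\}$, $Y^{\ell+1}=\{\hat1\}$; $\prec$ is the covering relation. The $k$-decomposition is $C=Y^0\cup\dots\cup Y^k$, $O=Y^{k+1}\cup\dots\cup Y^{\ell+1}$. The chain-order polytope $\mathcal{O}_{C,O}(\tau)\subseteq\mathbb{R}^{\hat P_\tau}$ consists of all $x$ with $x_{\hat0}=0$, $x_{\hat1}=1$, $x_p\ge0$ for $p\in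 C$ (nonnegativity inequalities), $x_a\le x_b$ for $a,b\in O$ with $a\prec b$ (order inequalities), and $x_{p_1}+\dots+x_{p_k}\le x_q$ for all $p_i\in Y^i$ ($1\le i\le k$), $q\in Y^{k+1}$ (chain inequalities). The partition $\varphi$ of $O$ associated with $F$ has as blocks the connected components of the graph with vertex set $O$ and edges $\{a,b\}$ for all $a\prec b$ in $O$ with $x_a=x_b$ for every $x\in F$. The quotient poset $\hat P_\tau/\pi$ is the set of blocks of $\pi$ ordered by the transitive closure of ''$B\le B'$ iff $p\le q$ for some $p\in B$, $q\in B'$''. *)

From HB Require Import structures.
From mathcomp Require Import all_boot all_order all_algebra.
From mathcomp Require Import reals.
From Stdlib Require Import Relations.
Set Implicit Arguments. Unset Strict Implicit. Unset Printing Implicit Defensive.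
Import Order.TTheory GRing.Theory Num.Theory.

(* Elements of hat P_tau: pairs (i, j), level i in 0..l+1, j < width i,
   where width 0 = width (l+1) = 1 (for hat0, hat1) and width i = tau_i. *)
Definition width (tau : seq nat) (i : nat) : nat :=
  if i == 0 then 1 else if i == (size tau).+1 then 1 else nth 0 tau i.-1.

Definition maxw (tau : seq nat) : nat := (foldr maxn 1 tau).+1.

Definition elt (tau : seq nat) : Type :=
  {p : 'I_(size tau).+2 * 'I_(maxw tau) | (nat_of_ord p.2 < width tau p.1)%N}.

Definition level (tau : seq nat) (p : elt tau) : nat := nat_of_ord (val p).1.

Definition hlt (tau : seq nat) (p q : elt tau) : bool := (level p < level q)%N.
Definition hle (tau : seq nat) (p q : elt tau) : bool := (p == q) || hlt p q.
Definition hcovers (tau : seq nat) (p q : elt tau) : Prop :=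
  hlt p q /\ ~ (exists r, hlt p r /\ hlt r q).

Local Open Scope ring_scope.

Definition in_COP (R : realType) (tau : seq nat) (k : nat) (x : elt tau -> R) : Prop :=
  [/\ (forall p, level p = 0%N -> x p = 0),
      (forall p, level p = (size tau).+1 -> x p = 1),
      (forall p, (level p <= k)%N -> 0 <= x p),
      (forall a b, (k < level a)%N -> (k < level b)%N -> hcovers a b -> x a <= x b)
    & (forall (g : nat -> elt tau) (q : elt tau),
         (forall i, (1 <= i <= k)%N -> level (g i) = i) -> level q = k.+1 ->
         \sum_(1 <= i < k.+1) x (g i) <= x q)].

Definition is_face (R : realType) (T : finType) (P F : (T -> R) -> Prop) : Prop :=
  exists (c : T -> R) (d : R),
    (forall x, P x -> \sum_(p : T) c p * x p <= d) /\
    (forall x, F x <-> (P x /\ \sum_(p : T) c p * x p = d)).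

Definition phi_edge (R : realType) (tau : seq nat) (k : nat)
  (F : (elt tau -> R) -> Prop) (a b : elt tau) : Prop :=
  [/\ (k < level a)%N, (k < level b)%N, hcovers a b & forall x, F x -> x a = x b].

(* a ~ b iff a, b lie in the same block of pi = phi U {{c} : c in C} *)
Definition pi_equiv (R : realType) (tau : seq nat) (k : nat)
  (F : (elt tau -> R) -> Prop) : relation (elt tau) :=
  clos_refl_sym_trans _ (phi_edge k F).

(* order of the quotient poset, lifted to elements: transitive closure of
   "B <= B' iff p <= q for some p in B, q in B'" *)
Definition quot_le (R : realType) (tau : seq nat) (k : nat)
  (F : (elt tau -> R) -> Prop) : relation (elt tau) :=
  clos_trans _ (fun u v => exists u' v',
     pi_equiv k F u u' /\ pi_equiv k F v v' /\ hle u' v').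

From Stdlib Require Import Relations.
From HB Require Import structures.
From mathcomp Require Import all_boot all_order all_algebra.
From mathcomp Require Import reals boolp zify.
Import Order.TTheory GRing.Theory Num.Theory.
Set Implicit Arguments. Unset Strict Implicit. Unset Printing Implicit Defensive.

#[local] Arguments rst_sym {A R x y}.
#[local] Arguments rst_trans {A R x y z}.

(* Each block of pi is either a singleton {c} with c in C or a set of elements of
   O on which all points of F agree; monotonicity of x along O then makes such a
   block fill every level between its lowest level lo and its highest level hi.
   Two distinct blocks occupy level ranges [lo, hi] that overlap in at most one
   level: otherwise monotonicity would force all four extreme elements to agree,
   merging the blocks.  Hence the rank lo + hi orders the quotient: B <= B' iff
   B = B' or rank B < rank B'.  A finite poset ordered by such a rank, with a
   unique block of least and of greatest rank, is an ordinal sum of antichains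
   with adjoined bottom and top, i.e. some hat P_tau'. *)

Lemma width_lt_maxw (tau : seq nat) (i : nat) : width tau i < maxw tau.
Proof.
have ge1 : 1 <= foldr maxn 1 tau by elim: tau => //= t tau IH; rewrite leq_max IH orbT.
rewrite /width /maxw ltnS; case: eqP => // _; case: eqP => // _.
have [lt_i|ge_i] := ltnP i.-1 (size tau); last by rewrite nth_default.
elim: tau i.-1 lt_i {ge1} => //= t tau IH [_ | j /IH le_j]; first exact: leq_maxl.
by rewrite leq_max le_j orbT.
Qed.

Definition elt_of (tau : seq nat) (i j : nat)
    (lt_i : i < (size tau).+2) (lt_j : j < width tau i) : elt tau :=
  exist _ (Ordinal lt_i, Ordinal (ltn_trans lt_j (width_lt_maxw tau i))) lt_j.

Lemma elt_inj (tau : seq nat) (p q : elt tau) :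
  level p = level q -> (val p).2 = (val q).2 :> nat -> p = q.
Proof.
case: p q => [[i j] ?] [[i' j'] ?] /= eq_i eq_j.
by apply: val_inj; congr pair; apply: val_inj.
Qed.

Section RankedQuotient.

Variables (T : finType) (eqv : rel T) (rk : T -> nat) (bot top : T).
Hypotheses (eqv_refl : reflexive eqv) (eqv_sym : symmetric eqv)
  (eqv_trans : transitive eqv).
Hypothesis rk_eqv : forall a b, eqv a b -> rk a = rk b.
Hypothesis bot_least : forall a, eqv a bot || (rk bot < rk a).
Hypothesis top_greatest : forall a, eqv a top || (rk a < rk top).
Hypothesis rk_bot_top : rk bot < rk top.

Definition cls (a : T) : {set T} := [set b | eqv a b].

Lemma cls_eqE a b : (cls a == cls b) = eqv a b.
Proof.
apply/eqP/idP => [eq_ab | ab].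
  by have := eqv_refl b; rewrite -[eqv b b]inE -/(cls b) -eq_ab inE.
apply/setP => c; rewrite !inE; apply/idP/idP => [ac | bc].
  by apply: eqv_trans ac; rewrite eqv_sym.
exact: eqv_trans bc.
Qed.

Definition ranks : seq nat := [seq n <- iota 0 (rk top).+1 | n \in codom rk].

Definition lev (a : T) : nat := index (rk a) ranks.

Definition height : nat := size ranks.

Lemma ranks_sorted : sorted ltn ranks.
Proof. by apply: sorted_filter; [exact: ltn_trans | exact: iota_ltn_sorted]. Qed.

Lemma rk_in_ranks a : rk a \in ranks.
Proof.
rewrite mem_filter codom_f mem_iota add0n ltnS /=.
by case/orP: (top_greatest a) => [/rk_eqv -> | /ltnW].
Qed.

Lemma lev_ltE a b : (lev a < lev b) = (rk a < rk b).
Proof.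
have [ra rb] := (rk_in_ranks a, rk_in_ranks b).
apply/idP/idP; first exact: (sorted_ltn_index ltn_trans ranks_sorted).
have ranks_leq := sub_sorted ltnW ranks_sorted.
apply: contraTT; rewrite -!leqNgt.
exact: (sorted_leq_index leq_trans leqnn ranks_leq).
Qed.

Lemma lev_lt_height a : lev a < height.
Proof. by rewrite index_mem rk_in_ranks. Qed.

Lemma lev_onto t : t < height -> exists a, lev a = t.
Proof.
move=> lt_t; have := mem_nth 0 lt_t; rewrite mem_filter => /andP[/codomP[a rk_a] _].
exists a; rewrite /lev -rk_a index_uniq //.
exact: sorted_uniq ltn_trans ltnn _ ranks_sorted.
Qed.

Lemma lev_eqv a b : eqv a b -> lev a = lev b.
Proof. by rewrite /lev => /rk_eqv ->. Qed.

Lemma height_gt0 : 0 < height.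
Proof. exact: leq_ltn_trans (leq0n _) (lev_lt_height bot). Qed.

Lemma lev_bot : lev bot = 0.
Proof.
have [a lev_a] := lev_onto height_gt0; apply/eqP; rewrite -leqn0 -lev_a.
by case/orP: (bot_least a) => [/lev_eqv -> // | ]; rewrite -lev_ltE => /ltnW.
Qed.

Lemma lev_top : lev top = height.-1.
Proof.
have [a lev_a] : exists a, lev a = height.-1 by apply: lev_onto; rewrite ltn_predL height_gt0.
have : lev a <= lev top.
  by case/orP: (top_greatest a) => [/lev_eqv -> // | ]; rewrite -lev_ltE => /ltnW.
by have := lev_lt_height top; lia.
Qed.

Lemma height_gt1 : 1 < height.
Proof. by have := rk_bot_top; rewrite -lev_ltE lev_bot lev_top; case: height. Qed.

Definition layer (t : nat) : {set {set T}} := cls @: [set a | lev a == t].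

Definition ranked_tau : seq nat := [seq #|layer t| | t <- iota 1 (height - 2)].

Lemma size_ranked_tau : (size ranked_tau).+2 = height.
Proof. by rewrite size_map size_iota; have := height_gt1; lia. Qed.

Lemma cls_in_layer a : cls a \in layer (lev a).
Proof. by rewrite imset_f // inE. Qed.

Lemma layer_gt0 t : t < height -> 0 < #|layer t|.
Proof. by case/lev_onto=> a <-; apply/card_gt0P; exists (cls a); apply: cls_in_layer. Qed.

Lemma layer_extremal c t :
  (forall a, lev a = t -> eqv a c) -> lev c = t -> #|layer t| = 1.
Proof.
move=> eqv_c lev_c; suff -> : layer t = [set cls c] by rewrite cards1.
apply/setP=> S.
apply/imsetP/set1P => [[a] | ->]; last by exists c; rewrite ?inE ?lev_c.
by rewrite inE => /eqP/eqv_c ac ->; apply/eqP; rewrite cls_eqE.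
Qed.

Lemma width_ranked_tau t : t < height -> width ranked_tau t = #|layer t|.
Proof.
move=> lt_t; rewrite /width; case: eqP => [-> | t_gt0].
  apply/esym/(layer_extremal (c := bot)) => [a lev_a|]; last exact: lev_bot.
  by case/orP: (bot_least a) => //; rewrite -lev_ltE lev_a.
case: eqP => [t_top | t_ntop].
  have {t_top} -> : t = height.-1 by rewrite -size_ranked_tau t_top.
  apply/esym/(layer_extremal (c := top)) => [a lev_a|]; last exact: lev_top.
  by case/orP: (top_greatest a) => //; rewrite -lev_ltE lev_a lev_top ltnn.
have lt_t' : t.-1 < height - 2 by have := size_ranked_tau; lia.
by rewrite (nth_map 0) ?size_iota // nth_iota // add1n prednK // lt0n; apply/eqP.
Qed.

Lemma ranked_tau_gt0 : all (fun t => 0 < t) ranked_tau.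
Proof.
rewrite all_map; apply/allP => t; rewrite mem_iota /= => range_t.
by apply: layer_gt0; lia.
Qed.

Definition idx (a : T) : nat := index (cls a) (enum (layer (lev a))).

Lemma lev_lt_size a : lev a < (size ranked_tau).+2.
Proof. by rewrite size_ranked_tau lev_lt_height. Qed.

Lemma idx_lt_width a : idx a < width ranked_tau (lev a).
Proof.
by rewrite width_ranked_tau ?lev_lt_height // cardE index_mem mem_enum cls_in_layer.
Qed.

Definition quot (a : T) : elt ranked_tau := elt_of (lev_lt_size a) (idx_lt_width a).

Lemma level_quot a : level (quot a) = lev a.
Proof. by []. Qed.

Lemma idx_quot a : (val (quot a)).2 = idx a :> nat.
Proof. by []. Qed.

Lemma quot_eqE a b : (quot a == quot b) = eqv a b.
Proof.
apply/eqP/idP => [eq_ab | ab]; last first.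
  have /eqP cls_ab : cls a == cls b by rewrite cls_eqE.
  apply: elt_inj; rewrite ?level_quot ?idx_quot /idx (lev_eqv ab) //.
  by rewrite cls_ab.
have lev_ab : lev a = lev b by rewrite -!level_quot eq_ab.
have idx_ab : idx a = idx b by rewrite -!idx_quot eq_ab.
have cls_a : cls a \in enum (layer (lev b)) by rewrite mem_enum -lev_ab cls_in_layer.
have cls_b : cls b \in enum (layer (lev b)) by rewrite mem_enum cls_in_layer.
move: idx_ab; rewrite /idx lev_ab => /(index_inj set0 cls_a cls_b)/eqP.
by rewrite cls_eqE.
Qed.

Lemma quot_onto q : exists a, quot a = q.
Proof.
have lt_t : level q < height by rewrite -size_ranked_tau ltn_ord.
have lt_j : (val q).2 < size (enum (layer (level q))).
  by rewrite -cardE -width_ranked_tau //; apply: (valP q).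
have := mem_nth set0 lt_j; rewrite mem_enum => /imsetP[a]; rewrite inE => /eqP lev_a cls_a.
exists a; apply: elt_inj; first by rewrite level_quot.
by rewrite idx_quot /idx lev_a -cls_a index_uniq ?enum_uniq.
Qed.

Lemma hle_quotE a b : hle (quot a) (quot b) = eqv a b || (rk a < rk b).
Proof. by rewrite /hle /hlt quot_eqE -lev_ltE. Qed.

Lemma ranked_quotient_hatP :
  exists tau' : seq nat, all (fun t => 0 < t) tau' /\
    exists q : T -> elt tau', (forall p, exists a, q a = p) /\
      (forall a b, (q a == q b) = eqv a b) /\
      (forall a b, hle (q a) (q b) = eqv a b || (rk a < rk b)).
Proof.
exists ranked_tau; split; first exact: ranked_tau_gt0.
by exists quot; split; [exact: quot_onto | split; [exact: quot_eqE | exact: hle_quotE]].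
Qed.

End RankedQuotient.

Lemma level_lt_size (tau : seq nat) (p : elt tau) : level p < (size tau).+2.
Proof. exact: ltn_ord. Qed.

Lemma level_width1_inj (tau : seq nat) (p q : elt tau) :
  level p = level q -> width tau (level p) = 1 -> p = q.
Proof.
move=> eq_pq w1; apply: elt_inj => //.
have := valP p; have := valP q; rewrite /= -/(level p) -/(level q) -eq_pq w1.
by rewrite !ltnS !leqn0 => /eqP -> /eqP ->.
Qed.

Section Levels.

Variable tau : seq nat.
Hypothesis tau_gt0 : all (fun t => 0 < t) tau.

Lemma width_gt0 i : i < (size tau).+2 -> 0 < width tau i.
Proof.
rewrite /width; case: ifP => // /negbT i_gt0; case: ifP => // /negbT i_ntop lt_i.
have lt_i1 : i.-1 < size tau by lia.
by apply: (allP tau_gt0); rewrite mem_nth.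
Qed.

Lemma exists_level i : i < (size tau).+2 -> exists p : elt tau, level p = i.
Proof. by move=> lt_i; exists (elt_of lt_i (width_gt0 lt_i)). Qed.

Lemma hcoversE (a b : elt tau) : hcovers a b <-> level b = (level a).+1.
Proof.
rewrite /hcovers /hlt; split=> [[lt_ab no_between] | ->]; last first.
  by split=> // -[r]; lia.
apply/eqP; rewrite eqn_leq lt_ab andbT leqNgt; apply/negP => gap.
have [r lev_r] := exists_level (ltn_trans gap (level_lt_size b)).
by apply: no_between; exists r; rewrite lev_r.
Qed.

End Levels.

Section FaceQuotient.

Variables (R : realType) (tau : seq nat) (k : nat) (F : (elt tau -> R) -> Prop).

Definition face_eq (a b : elt tau) : Prop := forall x, F x -> x a = x b.

Local Notation pe := (pi_equiv k F).

Definition pi_equivb (a b : elt tau) : bool := `[< pe a b >].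

Lemma pi_equivP a b : reflect (pe a b) (pi_equivb a b).
Proof. exact: asboolP. Qed.

Lemma pi_equivb_refl : reflexive pi_equivb.
Proof. by move=> a; apply/pi_equivP/rst_refl. Qed.

Lemma pi_equivb_sym : symmetric pi_equivb.
Proof. by move=> a b; apply/pi_equivP/pi_equivP => /rst_sym. Qed.

Lemma pi_equivb_trans : transitive pi_equivb.
Proof. by move=> b a c /pi_equivP ab /pi_equivP bc; apply/pi_equivP/(rst_trans ab bc). Qed.

Lemma pi_equiv_cases a b :
  pe a b -> a = b \/ [/\ k < level a, k < level b & face_eq a b].
Proof.
elim=> {a b} [a b [ka kb _ eq_ab] | a | a b _ [-> | [ka kb eq_ab]] | a b c _ ab _ bc].
- by right.
- by left.
- by left.
- by right; split=> // x Fx; rewrite eq_ab.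
case: ab => [-> // | [ka kb eq_ab]]; case: bc => [<- | [_ kc eq_bc]]; first by right.
by right; split=> // x Fx; rewrite eq_ab ?eq_bc.
Qed.

Lemma pi_equiv_C a b : level a <= k -> pe a b -> b = a.
Proof. by move=> ak /pi_equiv_cases[-> // | [ka _ _]]; lia. Qed.

Definition lo_el (a : elt tau) : elt tau := [arg min_(b < a | pi_equivb a b) level b].
Definition hi_el (a : elt tau) : elt tau := [arg max_(b > a | pi_equivb a b) level b].
Definition lo (a : elt tau) : nat := level (lo_el a).
Definition hi (a : elt tau) : nat := level (hi_el a).
Definition block_rank (a : elt tau) : nat := lo a + hi a.

Lemma pi_equiv_lo_el a : pe a (lo_el a).
Proof. by rewrite /lo_el; case: arg_minnP => [|b /pi_equivP //]; apply: pi_equivb_refl. Qed.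

Lemma lo_min a b : pe a b -> lo a <= level b.
Proof.
rewrite /lo /lo_el; case: arg_minnP => [|c _ min_c /pi_equivP/min_c //].
exact: pi_equivb_refl.
Qed.

Lemma pi_equiv_hi_el a : pe a (hi_el a).
Proof. by rewrite /hi_el; case: arg_maxnP => [|b /pi_equivP //]; apply: pi_equivb_refl. Qed.

Lemma hi_max a b : pe a b -> level b <= hi a.
Proof.
rewrite /hi /hi_el; case: arg_maxnP => [|c _ max_c /pi_equivP/max_c //].
exact: pi_equivb_refl.
Qed.

Lemma lo_le_level a : lo a <= level a.
Proof. exact/lo_min/rst_refl. Qed.

Lemma level_le_hi a : level a <= hi a.
Proof. exact/hi_max/rst_refl. Qed.

Lemma rank_pi_equiv a b : pe a b -> block_rank a = block_rank b.
Proof.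
move=> ab; have ba := rst_sym ab.
have := lo_min (rst_trans ab (pi_equiv_lo_el b)).
have := lo_min (rst_trans ba (pi_equiv_lo_el a)).
have := hi_max (rst_trans ab (pi_equiv_hi_el b)).
have := hi_max (rst_trans ba (pi_equiv_hi_el a)).
rewrite /block_rank /lo /hi; lia.
Qed.

Lemma block_extent_cases a :
  [/\ lo a <= k & hi a = lo a] \/ [/\ k < lo a & face_eq (lo_el a) (hi_el a)].
Proof.
have lo_hi := rst_trans (rst_sym (pi_equiv_lo_el a)) (pi_equiv_hi_el a).
case: (pi_equiv_cases lo_hi) => [eq_lh | [k_lo _ eq_lh]]; last by right.
rewrite /hi -eq_lh; case: (leqP (lo a) k) => [k_lo | lo_k]; first by left.
by right; split=> // x _; rewrite eq_lh.
Qed.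

Hypothesis tau_gt0 : all (fun t => 0 < t) tau.
Hypothesis F_face : is_face (@in_COP R tau k) F.

Lemma face_in_COP x : F x -> in_COP k x.
Proof. by case: F_face => c [d [_ face_F]] /face_F[]. Qed.

Lemma face_mono x a b : F x -> k < level a -> level a < level b -> (x a <= x b)%R.
Proof.
move=> /face_in_COP[_ _ _ x_mono _] ka.
suff mono_d d (b' : elt tau) : level b' = level a + d.+1 -> (x a <= x b')%R.
  by move=> lt_ab; apply: (mono_d (level b - level a).-1); lia.
elim: d b' => [|d IH] b' lev_b.
  by apply: x_mono; rewrite ?hcoversE; lia.
have [r lev_r] : exists r : elt tau, level r = level a + d.+1.
  by apply: exists_level => //; have := level_lt_size b'; lia.
apply: le_trans (IH r lev_r) (x_mono _ _ _ _ _); rewrite ?hcoversE; lia.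
Qed.

Lemma face_eq_pi_equiv a b :
  k < level a -> level a < level b -> face_eq a b -> pe a b.
Proof.
move=> ka.
suff pe_d d (b' : elt tau) : level b' = level a + d.+1 -> face_eq a b' -> pe a b'.
  by move=> lt_ab; apply: (pe_d (level b - level a).-1); lia.
elim: d b' => [|d IH] b' lev_b eq_ab.
  by apply: rst_step; split; rewrite ?hcoversE //; lia.
have [r lev_r] : exists r : elt tau, level r = level a + d.+1.
  by apply: exists_level => //; have := level_lt_size b'; lia.
have eq_ar : face_eq a r.
  move=> x Fx; apply/le_anti; rewrite face_mono ?lev_r //=; last by lia.
  by rewrite eq_ab // face_mono //; lia.
apply: (rst_trans (IH r lev_r eq_ar)); apply: rst_step.
by split; rewrite ?hcoversE; try lia; move=> x Fx; rewrite -eq_ar ?eq_ab.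
Qed.

Lemma blocks_separated a b : ~ pe a b -> hi a <= lo b \/ hi b <= lo a.
Proof.
move=> not_ab; case: (leqP (hi a) (lo b)) => [|lo_b_hi_a]; first by left.
case: (leqP (hi b) (lo a)) => [|lo_a_hi_b]; first by right.
case: (block_extent_cases a) (block_extent_cases b)
  => [[? ?] | [ka eq_a]] [[? ?] | [kb eq_b]]; try lia.
have eq_ab : face_eq (lo_el a) (hi_el b).
  move=> x Fx; apply/le_anti; rewrite face_mono //=.
  by rewrite -eq_b // eq_a // face_mono.
case: not_ab; apply: (rst_trans (pi_equiv_lo_el a)).
apply: (rst_trans (face_eq_pi_equiv ka lo_a_hi_b eq_ab)).
exact/rst_sym/pi_equiv_hi_el.
Qed.

Lemma rank_lt_level a b : level a < level b -> pe a b \/ block_rank a < block_rank b.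
Proof.
move=> lt_ab; case: (pi_equivP a b) => [|not_ab]; first by left.
have := lo_le_level a; have := level_le_hi a; have := lo_le_level b; have := level_le_hi b.
by right; case: (blocks_separated not_ab); rewrite /block_rank; lia.
Qed.

Lemma quot_le_rankE a b : quot_le k F a b <-> pe a b \/ block_rank a < block_rank b.
Proof.
split=> [|[ab | lt_ab]].
- elim=> {a b} [a b [a' [b' [aa' [bb' /orP[/eqP eq_ab' | lt_ab']]]]] | a b c _ ab _ bc].
  + by left; apply: (rst_trans aa'); rewrite eq_ab'; apply: rst_sym.
  + rewrite (rank_pi_equiv aa') (rank_pi_equiv bb').
    case: (rank_lt_level lt_ab') => [a'b' | ]; last by right.
    left; apply: (rst_trans aa'); apply: (rst_trans a'b').
    exact: rst_sym.
  + case: ab bc => [ab | lt_ab] [bc | lt_bc].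
    * by left; apply: (rst_trans ab).
    * by right; rewrite (rank_pi_equiv ab).
    * by right; rewrite -(rank_pi_equiv bc).
    * by right; apply: ltn_trans lt_bc.
- apply: t_step; exists a, a; split; first exact: rst_refl.
  by split; [exact: rst_sym | rewrite /hle eqxx].
- apply: t_step; exists (lo_el a), (hi_el b).
  split; first exact: pi_equiv_lo_el.
  split; first exact: pi_equiv_hi_el.
  have := lo_le_level a; have := level_le_hi a; have := lo_le_level b; have := level_le_hi b.
  by move: lt_ab; rewrite /hle /hlt /block_rank /lo /hi; lia.
Qed.

Lemma rank_hat0_least o :
  level o = 0 -> forall a, pi_equivb a o || (block_rank o < block_rank a).
Proof.
move=> lev_o a; have [lev_a | a_gt0] := posnP (level a).
  by rewrite (@level_width1_inj _ a o) ?pi_equivb_refl // lev_a.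
have := rank_lt_level (a := o) (b := a); rewrite lev_o => /(_ a_gt0)[oa | ->].
  by rewrite pi_equivb_sym; apply/orP; left; apply/pi_equivP.
by rewrite orbT.
Qed.

Lemma rank_hat1_greatest l :
  level l = (size tau).+1 -> forall a, pi_equivb a l || (block_rank a < block_rank l).
Proof.
move=> lev_l a; have [lt_a | ge_a] := ltnP (level a) (size tau).+1.
  have := rank_lt_level (a := a) (b := l); rewrite lev_l => /(_ lt_a)[al | ->].
    by apply/orP; left; apply/pi_equivP.
  by rewrite orbT.
have lev_a : level a = level l by have := level_lt_size a; lia.
by rewrite (@level_width1_inj _ a l) ?pi_equivb_refl // lev_a lev_l /width eqxx.
Qed.

Lemma rank_hat0_lt_hat1 o l :
  level o = 0 -> level l = (size tau).+1 -> block_rank o < block_rank l.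
Proof.
move=> lev_o lev_l.
have [ol | //] : pe o l \/ block_rank o < block_rank l.
  by apply: rank_lt_level; rewrite lev_o lev_l.
by move: lev_l; rewrite (pi_equiv_C _ ol) ?lev_o.
Qed.

End FaceQuotient.

Local Open Scope ring_scope.

Theorem lemma3p5 (R : realType) (tau : seq nat) (k : nat)
  (F : (elt tau -> R) -> Prop) :
  all (fun t => (0 < t)%N) tau ->
  (k <= size tau)%N ->
  is_face (@in_COP R tau k) F ->
  (exists x, F x) ->
  (forall p : elt tau, (0 < level p <= k)%N -> exists x, F x /\ x p != 0) ->
  (forall (g : nat -> elt tau) (q : elt tau),
     (forall i, (1 <= i <= k)%N -> level (g i) = i) -> level q = k.+1 ->
     exists x, F x /\ \sum_(1 <= i < k.+1) x (g i) != x q) ->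
  exists tau' : seq nat, all (fun t => (0 < t)%N) tau' /\
    exists h : elt tau -> elt tau',
      (forall b, exists a, h a = b) /\
      (forall a b, h a = h b <-> pi_equiv k F a b) /\
      (forall a b, hle (h a) (h b) <-> quot_le k F a b).
Proof.
move=> tau_gt0 _ F_face _ _ _.
have [o lev_o] := exists_level tau_gt0 (ltn0Sn (size tau).+1).
have [l lev_l] := exists_level tau_gt0 (ltnSn (size tau).+1).
have rank_pi_equivb a b : pi_equivb k F a b -> block_rank k F a = block_rank k F b.
  by move/pi_equivP; apply: rank_pi_equiv.
have [tau' [tau'_gt0 [q [q_onto [q_eqE q_leE]]]]] :=
  ranked_quotient_hatP (@pi_equivb_refl R tau k F) (@pi_equivb_sym R tau k F)
    (@pi_equivb_trans R tau k F) rank_pi_equivb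
    (rank_hat0_least tau_gt0 F_face lev_o) (rank_hat1_greatest tau_gt0 F_face lev_l)
    (rank_hat0_lt_hat1 tau_gt0 F_face lev_o lev_l).
exists tau'; split=> //; exists q; split=> //; split=> a b.
  split=> [/eqP | /pi_equivP ab]; last by apply/eqP; rewrite q_eqE.
  by rewrite q_eqE => /pi_equivP.
rewrite q_leE (quot_le_rankE tau_gt0 F_face).
by split=> [/orP[/pi_equivP | ] | [/pi_equivP -> | ->]]; [left | right | | rewrite orbT].
Qed.
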